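(* Let $n,k$ be positive integers with $n\ge 3k$, put $C=n/k$, and let $\mathcal F\subset\binom{[n]}{k}$ be an intersecting family with $|\mathcal D(\mathcal F)|>\sum_{0\le \ell<k}\binom{n-1}{\ell}$. Then $$|\mathcal D^{(k-1)}(\mathcal F)|>\Big(1-\frac{2}{(C-1)^2}\Big)\binom{n-1}{k-1}\quad\text{and}\quad |\mathcal D^{(k-1)}(\mathcal F)|\ge\Big(1-\frac 2C\Big)\binom{n}{k-1}.$$
   Context: $[n]=\{1,\dots,n\}$; $\binom{[n]}{k}$ is the family of all $k$-element subsets of $[n]$. A family $\mathcal F$ is intersecting if $F\cap F'\neq\varnothing$ for all $F,F'\in\mathcal F$. $\mathcal D(\mathcal F):=\{F\setminus F' : F,F'\in\mathcal F\}$ and $\mathcal D^{(\ell)}(\mathcal F):=\{D\in\mathcal D(\mathcal F): |D|=\ell\}$. *)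

From mathcomp Require Import all_boot all_order all_algebra.
Set Implicit Arguments. Unset Strict Implicit. Unset Printing Implicit Defensive.

(* Ground set [n] is modelled by 'I_n. *)
Definition intersecting (T : finType) (F : {set {set T}}) : bool :=
  [forall A in F, forall B in F, A :&: B != set0].

Definition diffFamily (T : finType) (F : {set {set T}}) : {set {set T}} :=
  [set A :\: B | A in F, B in F].

Definition diffFamilyL (T : finType) (F : {set {set T}}) (l : nat) : {set {set T}} :=
  [set D in diffFamily F | #|D| == l].

From mathcomp Require Import all_boot all_order all_algebra.
From mathcomp Require Import zify ring lra.
Set Implicit Arguments. Unset Strict Implicit. Unset Printing Implicit Defensive.
Import Order.TTheory GRing.Theory Num.Theory.

(* Write d = |D^(k-1)(F)|, N = n - 1.  Since F is intersecting
   and k-uniform, every A \ B in D(F) has fewer than k elements, so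
   |D(F)| <= d + sum_{l<k-1} C(n,l).  Together with the hypothesis
   |D(F)| > sum_{l<k} C(N,l) and Pascal's rule for partial sums this gives
   C(N,k-1) < d + sum_{l<k-2} C(N,l) <= d + 2 C(N,k-3), the last step by the
   geometric decay of binomial coefficients below N/3.  Writing
   x = C(N,k-3), y = C(N,k-2), z = C(N,k-1) (so y + z = C(n,k-1)), the two
   consecutive ratios of binomial coefficients yield the polynomial
   estimates x (n-k)^2 <= k^2 z and (n-2k) y + 2 n x <= 2 k z.  Both claimed
   bounds then follow from z < d + 2x by elementary algebra in an ordered
   field. *)

Lemma card_small_sets (T : finType) m :
  #|[set D : {set T} | #|D| < m]| = \sum_(0 <= l < m) 'C(#|T|, l).
Proof.
elim: m => [|m IHm].
  by rewrite big_geq //; apply/eqP; rewrite cards_eq0; apply/eqP/setP=> D; rewrite !inE.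
have split_m : [set D : {set T} | #|D| < m.+1] =
               [set D : {set T} | #|D| < m] :|: [set D : {set T} | #|D| == m].
  by apply/setP=> D; rewrite !inE ltnS leq_eqVlt orbC.
have disj : [set D : {set T} | #|D| < m] :&: [set D : {set T} | #|D| == m] = set0.
  by apply/setP=> D; rewrite !inE; case: eqP => [->|]; rewrite ?ltnn ?andbF.
by rewrite split_m cardsU disj cards0 subn0 IHm card_draws big_nat_recr.
Qed.

Section DifferenceFamily.
Variables (T : finType) (k : nat) (F : {set {set T}}).
Hypotheses (uniformF : forall A, A \in F -> #|A| = k) (interF : intersecting F).

(* A difference A \ B of two members of an intersecting k-uniform family
   loses the nonempty intersection A :&: B, so it has fewer than k elements. *)
Lemma card_diff_lt D : D \in diffFamily F -> #|D| < k.
Proof.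
case/imset2P=> A B AF BF ->.
have meetAB : A :&: B != set0.
  by move/forallP/(_ A): interF; rewrite AF => /forallP/(_ B); rewrite BF.
have := subset_leq_card (subsetIl A B).
by rewrite cardsD (uniformF AF); move: meetAB; rewrite -card_gt0; lia.
Qed.

(* Hence D(F) is covered by D^(k-1)(F) and the sets of size < k - 1. *)
Lemma card_diffFamily_le :
  #|diffFamily F| <= #|diffFamilyL F k.-1| + \sum_(0 <= l < k.-1) 'C(#|T|, l).
Proof.
rewrite -card_small_sets; apply: leq_trans (leq_card_setU _ _).
apply/subset_leq_card/subsetP=> D DF; rewrite !inE DF /=.
by have := card_diff_lt DF; lia.
Qed.

End DifferenceFamily.

Lemma sum_bin_pascal N m :
  \sum_(0 <= l < m.+1) 'C(N.+1, l) =
  \sum_(0 <= l < m.+1) 'C(N, l) + \sum_(0 <= l < m) 'C(N, l).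
Proof.
rewrite big_nat_recl // (eq_bigr _ (fun l _ => binS N l)) big_split /=.
by rewrite addnA !bin0 -(bin0 N) -big_nat_recl.
Qed.

Lemma bin_double N m : 3 * m.+1 <= N -> 2 * 'C(N, m) <= 'C(N, m.+1).
Proof.
move=> le3mN; rewrite -(leq_pmul2l (ltn0Sn m)) mul_bin_left mulnA leq_mul2r.
by apply/orP; right; lia.
Qed.

Lemma bin_tail_le N m : 3 * m <= N -> \sum_(0 <= l < m.+1) 'C(N, l) <= 2 * 'C(N, m).
Proof.
elim: m => [|m IHm] le3mN; first by rewrite big_nat1 bin0.
rewrite big_nat_recr //=.
have := IHm ltac:(lia).
have := bin_double le3mN; lia.
Qed.

(* Two consecutive applications of C(N,m+1) (m+1) = C(N,m) (N-m). *)
Lemma bin_two_step N m :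
  m.+1 * m.+2 * 'C(N, m.+2) = (N - m) * (N - m.+1) * 'C(N, m).
Proof. by rewrite -mulnA mul_bin_left mulnCA mul_bin_left mulnA (mulnC (N - m.+1)). Qed.

Lemma bin_gap_sq N m : 'C(N, m) * (N.+1 - m.+3) ^ 2 <= m.+3 ^ 2 * 'C(N, m.+2).
Proof.
have coef : m.+1 * m.+2 <= m.+3 ^ 2 by rewrite expnS expn1; apply: leq_mul; lia.
have gap : (N.+1 - m.+3) ^ 2 <= (N - m) * (N - m.+1).
  by rewrite expnS expn1; apply: leq_mul; lia.
rewrite -(@leq_pmul2l (m.+1 * m.+2)) // mulnCA [X in _ <= X]mulnCA bin_two_step.
by rewrite [X in _ <= X]mulnA [X in _ <= X]mulnC leq_mul2l leq_mul ?orbT.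
Qed.

Lemma bin_gap_lin N m : 3 * m.+3 <= N.+1 ->
  (N.+1 - 2 * m.+3) * 'C(N, m.+1) + 2 * N.+1 * 'C(N, m) <= 2 * m.+3 * 'C(N, m.+2).
Proof.
move=> le_mN.
have poly : m.+2 * (N.+1 - 2 * m.+3) * (N - m) + 2 * N.+1 * (m.+1 * m.+2)
            <= 2 * m.+3 * ((N - m) * (N - m.+1)).
  have [P ->] : exists P, N = P + 3 * m + 8 by exists (N - (3 * m + 8)); lia.
  have -> : P + 3 * m + 8 - m = P + 2 * m + 8 by lia.
  have -> : P + 3 * m + 8 - m.+1 = P + 2 * m + 7 by lia.
  have -> : (P + 3 * m + 8).+1 - 2 * m.+3 = P + m + 3 by lia.
  nia.
rewrite -(@leq_pmul2l (m.+1 * m.+2)) // mulnDr.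
have -> : m.+1 * m.+2 * ((N.+1 - 2 * m.+3) * 'C(N, m.+1)) =
          m.+2 * (N.+1 - 2 * m.+3) * (m.+1 * 'C(N, m.+1)) by ring.
have -> : m.+1 * m.+2 * (2 * N.+1 * 'C(N, m)) = 2 * N.+1 * (m.+1 * m.+2) * 'C(N, m) by ring.
have -> : m.+1 * m.+2 * (2 * m.+3 * 'C(N, m.+2)) =
          2 * m.+3 * (m.+1 * m.+2 * 'C(N, m.+2)) by ring.
rewrite mul_bin_left bin_two_step !mulnA -mulnDl leq_mul2r.
by apply/orP; right; move: poly; rewrite !mulnA.
Qed.

(* The numerical content of the argument: from the counting inequality we
   extract x (= C(n-1,k-3), or 0 for k <= 2) and y with y + C(n-1,k-1) = C(n,k-1)
   satisfying the estimates used in the final algebra. *)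
Lemma binomial_certificate n k d : 0 < k -> 3 * k <= n ->
  \sum_(0 <= l < k) 'C(n.-1, l) < d + \sum_(0 <= l < k.-1) 'C(n, l) ->
  exists x y, [/\ y + 'C(n.-1, k.-1) = 'C(n, k.-1), 'C(n.-1, k.-1) < d + 2 * x,
     x * (n - k) ^ 2 <= k ^ 2 * 'C(n.-1, k.-1) &
     (n - 2 * k) * y + 2 * n * x <= 2 * k * 'C(n.-1, k.-1)].
Proof.
case: n => [|N]; first by lia.
case: k => [//|[|[|m]]] _ le_kn /=.
- rewrite big_nat1 big_geq // bin0 => lt_1d.
  by exists 0, 0; rewrite !bin0; split; lia.
- rewrite big_nat1 !big_nat_recr //= big_geq // !bin0 bin1 => lt_Nd.
  by exists 0, 1; rewrite bin1; split; lia.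
rewrite (sum_bin_pascal N m.+1) big_nat_recr //= => lt_z.
exists 'C(N, m), 'C(N, m.+1); split.
- by rewrite binS addnC.
- by have := @bin_tail_le N m ltac:(lia); lia.
- exact: bin_gap_sq.
- exact: bin_gap_lin.
Qed.

Section OrderedFieldBounds.
Local Open Scope ring_scope.
Variables (R : realFieldType) (n k d x : R).
Hypothesis k_gt0 : 0 < k.

(* With C = n / k: 2 z / (C - 1)^2 = 2 k^2 z / (n - k)^2 >= 2 x > z - d. *)
Lemma first_bound z : k < n ->
  x * (n - k) ^+ 2 <= k ^+ 2 * z -> z < d + 2 * x ->
  (1 - 2 / (n / k - 1) ^+ 2) * z < d.
Proof.
move=> lt_kn gap lt_z.
have -> : (1 - 2 / (n / k - 1) ^+ 2) * z = z - 2 * (k ^+ 2 * z / (n - k) ^+ 2).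
  by field; rewrite gt_eqF ?subr_gt0 // lt0r_neq0.
have : x <= k ^+ 2 * z / (n - k) ^+ 2 by rewrite ler_pdivlMr ?exprn_gt0 ?subr_gt0.
lra.
Qed.

(* With C = n / k: 2 (y + z) / C = 2 k (y + z) / n >= y + 2 x >= y + z - d. *)
Lemma second_bound y z : 0 < n ->
  (n - 2 * k) * y + 2 * n * x <= 2 * k * z -> z <= d + 2 * x ->
  (1 - 2 / (n / k)) * (y + z) <= d.
Proof.
move=> n_gt0 gap le_z.
have -> : (1 - 2 / (n / k)) * (y + z) = y + z - 2 * k * (y + z) / n.
  by field; rewrite !gt_eqF.
have : y + z - (z - 2 * x) <= 2 * k * (y + z) / n by rewrite ler_pdivlMr //; lra.
lra.
Qed.

End OrderedFieldBounds.

Theorem mainTheorem7 (n k : nat) (F : {set {set 'I_n}}) :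
  (0 < k)%N -> (0 < n)%N -> (3 * k <= n)%N ->
  (forall A, A \in F -> #|A| = k) ->
  intersecting F ->
  (\sum_(0 <= l < k) 'C(n.-1, l) < #|diffFamily F|)%N ->
  let C : rat := (n%:R / k%:R)%R in
  ((1 - 2 / (C - 1) ^+ 2) * ('C(n.-1, k.-1))%:R < (#|diffFamilyL F k.-1|)%:R)%R /\
  ((1 - 2 / C) * ('C(n, k.-1))%:R <= (#|diffFamilyL F k.-1|)%:R)%R.
Proof.
move=> k_gt0 n_gt0 le_3k_n uniformF interF large_D C.
have := leq_trans large_D (card_diffFamily_le uniformF interF); rewrite card_ord.
case/(binomial_certificate k_gt0 le_3k_n) => x [y [pascal lt_z gap_sq gap_lin]].
have le_kn : k <= n by lia.
have le_2k_n : 2 * k <= n by lia.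
rewrite -pascal natrD /C; split.
- apply: (first_bound (x := x%:R)); rewrite ?ltr0n ?ltr_nat //; first by lia.
  + by rewrite -natrB // -!natrX -!natrM ler_nat.
  + by rewrite -natrM -natrD ltr_nat.
- apply: (second_bound (x := x%:R)); rewrite ?ltr0n //.
  + by rewrite -natrM -natrB // -!natrM -natrD ler_nat.
  + by rewrite -natrM -natrD ler_nat ltnW.
Qed.
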